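(* If $\lambda_1<a$, $1<q<p$ and $b>0$, then for any fixed $\Lambda>0$ there exists $t_0=t_0(\Lambda)>0$ such that $I^+_{\lambda,s}(t\varphi_1)<0$ for all $t\ge t_0$ and all $0<\lambda<\Lambda$.
   Context: $\Omega\subset\mathbb{R}^N$ bounded smooth domain, $s\in(0,1)$, $p>1$, $N>sp$, $p_s^*=\frac{Np}{N-sp}$. $X_p^s=\{u\in W^{s,p}(\mathbb{R}^N): u=0 \text{ a.e. in } \mathbb{R}^N\setminus\Omega\}$ with norm $\|u\|_{X_p^s}=\big(\int_{\mathbb{R}^{2N}}\frac{|u(x)-u(y)|^p}{|x-y|^{N+sp}}dxdy\big)^{1/p}$. $\lambda_1=\inf\{\|u\|_{X_p^s}^p:u\in X_p^s,\|u\|_{L^p(\Omega)}=1\}$ is the first eigenvalue of the fractional $p$-Laplacian $(-\Delta)^s_p$ on $X_p^s$, and $\varphi_1$ the associated positive, $L^p$-normalized eigenfunction. $I^+_{\lambda,s}(u)=\frac1p\|u\|_{X_p^s}^p+\frac\lambda q\int_\Omega|u^+|^q-\frac ap\int_\Omega|u^+|^p-\frac{b}{p_s^*}\int_\Omega(u^+)^{p_s^*}$, $u^+=\max\{u,0\}$. *)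

From HB Require Import structures.
From mathcomp Require Import all_boot all_order all_algebra.
From mathcomp Require Import all_classical all_reals all_analysis.
Import Order.TTheory GRing.Theory Num.Theory.
Import numFieldNormedType.Exports.
Local Open Scope classical_set_scope.
Local Open Scope ring_scope.

(** R^(n+1) is built as the iterated product (..((R * R) * R) ..) * R of the
    Lebesgue measure spaces, with the (completed-free) product measure
    [m \x lebesgue_measure] of mathcomp-analysis.  [toRow] identifies a
    point with the row vector of its coordinates, which carries the usual
    topology / normed structure (used for the domain conditions). *)

Record mspace (R : realType) := MSpace {
  ms_disp : measure_display;
  ms_type : measurableType ms_disp;
  ms_meas : {measure set ms_type -> \bar R}
}.

Fixpoint Rspace (R : realType) (n : nat) : mspace R :=
  match n with
  | 0 => @MSpace R _ _ (@lebesgue_measure R)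
  | n'.+1 => @MSpace R _ _ ((@ms_meas R (Rspace R n')) \x (@lebesgue_measure R))%E
  end.

Fixpoint toRow (R : realType) (n : nat) : @ms_type R (Rspace R n) -> 'rV[R]_n.+1 :=
  match n return @ms_type R (Rspace R n) -> 'rV[R]_n.+1 with
  | 0 => fun x => \row_(i < 1) (x : R)
  | n'.+1 => fun x => row_mx (\row_(i < 1) (x.2 : R)) (@toRow R n' x.1)
  end.

(** R^N (meaningful for N >= 1), its Lebesgue measure, coordinates. *)
Definition RN (R : realType) (N : nat) : measurableType _ := @ms_type R (Rspace R N.-1).
Definition lebN (R : realType) (N : nat) : {measure set RN R N -> \bar R} :=
  @ms_meas R (Rspace R N.-1).
Definition coord (R : realType) (N : nat) (x : RN R N) : 'rV[R]_(N.-1).+1 :=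
  @toRow R N.-1 x.
Arguments coord {R N}.

Definition edist (R : realType) (N : nat) (x y : RN R N) : R :=
  Num.sqrt (\sum_(i < (N.-1).+1) ((coord x - coord y) 0 i) ^+ 2).
Arguments edist {R N}.

Fixpoint iterD (R : realType) (n : nat) (vs : seq 'rV[R]_n) (f : 'rV[R]_n -> R)
  : 'rV[R]_n -> R :=
  match vs with
  | [::] => f
  | v :: vs' => fun x => 'D_v (@iterD R n vs' f) x
  end.
Arguments iterD {R n}.

Definition smooth (R : realType) (n : nat) (f : 'rV[R]_n -> R) : Prop :=
  forall vs : seq 'rV[R]_n,
    continuous (iterD vs f) /\ (forall x v, derivable (iterD vs f) x v).
Arguments smooth {R n}.

Definition smooth_boundary (R : realType) (n : nat) (U : set 'rV[R]_n) : Prop :=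
  forall z, closure U z -> ~ U z ->
    exists r : R, 0 < r /\ exists rho : 'rV[R]_n -> R,
      smooth rho /\
      (forall y, ball z r y -> exists v, 'D_v rho y != 0) /\
      (forall y, ball z r y -> (U y <-> rho y < 0)).
Arguments smooth_boundary {R n}.

Definition bounded_smooth_domain (R : realType) (N : nat) (Om : set (RN R N)) : Prop :=
  let U := (@coord R N) @` Om in
  Om !=set0 /\ open U /\ connected U /\
  (exists M : R, forall x, Om x -> `|coord x| <= M) /\
  smooth_boundary U.
Arguments bounded_smooth_domain {R} N.

Definition gagliardo (R : realType) (N : nat) (s p : R) (u : RN R N -> R) : \bar R :=
  (\int[lebN R N]_x \int[lebN R N]_y
     ((`|u x - u y| `^ p) / (edist x y `^ (N%:R + s * p)))%:E)%E.
Arguments gagliardo {R} N.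

Definition in_Xps (R : realType) (N : nat) (s p : R) (Om : set (RN R N))
  (u : RN R N -> R) : Prop :=
  measurable_fun setT u /\
  {ae lebN R N, forall x, ~ Om x -> u x = 0} /\
  (\int[lebN R N]_x (`|u x| `^ p)%:E < +oo)%E /\
  (gagliardo N s p u < +oo)%E.
Arguments in_Xps {R} N.

Definition normX (R : realType) (N : nat) (s p : R) (u : RN R N -> R) : R :=
  fine (gagliardo N s p u) `^ p^-1.
Arguments normX {R} N.

Definition LpOm (R : realType) (N : nat) (p : R) (Om : set (RN R N))
  (u : RN R N -> R) : R :=
  fine (\int[lebN R N]_(x in Om) (`|u x| `^ p)%:E)%E `^ p^-1.
Arguments LpOm {R} N.

Definition lambda1 (R : realType) (N : nat) (s p : R) (Om : set (RN R N)) : R :=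
  inf [set normX N s p u `^ p |
        u in [set u | in_Xps N s p Om u /\ LpOm N p Om u = 1]].
Arguments lambda1 {R} N.

(** weak eigenfunction of (-Delta)^s_p on X_p^s with eigenvalue lam *)
Definition is_eigenfunction (R : realType) (N : nat) (s p : R) (Om : set (RN R N))
  (lam : R) (phi : RN R N -> R) : Prop :=
  in_Xps N s p Om phi /\
  forall v, in_Xps N s p Om v ->
    Rintegral (lebN R N) setT (fun x => Rintegral (lebN R N) setT (fun y =>
       `|phi x - phi y| `^ (p - 2) * (phi x - phi y) * (v x - v y)
         / edist x y `^ (N%:R + s * p)))
    = lam * Rintegral (lebN R N) Om (fun x => `|phi x| `^ (p - 2) * phi x * v x).
Arguments is_eigenfunction {R} N.

Definition first_eigenfunction (R : realType) (N : nat) (s p : R)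
  (Om : set (RN R N)) (phi : RN R N -> R) : Prop :=
  is_eigenfunction N s p Om (lambda1 N s p Om) phi /\
  {ae lebN R N, forall x, Om x -> 0 < phi x} /\
  LpOm N p Om phi = 1.
Arguments first_eigenfunction {R} N.

Definition pstar (R : realType) (N : nat) (s p : R) : R := N%:R * p / (N%:R - s * p).
Arguments pstar {R} N.

Definition Iplus (R : realType) (N : nat) (s p q a b lam : R) (Om : set (RN R N))
  (u : RN R N -> R) : \bar R :=
  ((p^-1 * normX N s p u `^ p)%:E
   + (lam / q)%:E * \int[lebN R N]_(x in Om) (`|Num.max (u x) 0| `^ q)%:E
   - (a / p)%:E * \int[lebN R N]_(x in Om) (`|Num.max (u x) 0| `^ p)%:E
   - (b / pstar N s p)%:E
       * \int[lebN R N]_(x in Om) (Num.max (u x) 0 `^ pstar N s p)%:E)%E.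

Arguments Iplus {R} N.

From Pilot Require Import Defs.
From HB Require Import structures.
From mathcomp Require Import all_boot all_order all_algebra.
From mathcomp Require Import all_classical all_reals all_analysis.
From mathcomp Require Import measurable_realfun lra.
Import Order.TTheory GRing.Theory Num.Theory.
Import numFieldNormedType.Exports.
Local Open Scope classical_set_scope.
Local Open Scope ring_scope.

(* Along the ray t |-> t phi1 every term of I^+ is homogeneous: the Gagliardo
   term and the a-term scale like t^p, the lambda-term like t^q <= t^p (t >= 1),
   and the critical term like t^(p_s^* ) with p_s^* > p.  Its coefficient
   int_Omega (phi1^+)^(p_s^* ) is positive, possibly infinite, because phi1 > 0
   a.e. on Omega and Omega has positive measure (||phi1||_p = 1), while the
   coefficients of the other terms are finite because Omega is bounded.  Hence
   the critical term wins for large t, uniformly in 0 < lambda < Lambda. *)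

Lemma powR_invK {R : realType} {x p : R} : 0 <= x -> 0 < p -> (x `^ p^-1) `^ p = x.
Proof. by move=> x0 p0; rewrite -powRrM mulVf ?gt_eqF // powRr1. Qed.

Lemma powR_le_1D_powR {R : realType} (x y q p : R) :
  0 <= x -> x <= y -> 0 < q -> q <= p -> x `^ q <= 1 + y `^ p.
Proof.
move=> x0 xy q0 qp; have yp0 : 0 <= y `^ p by exact: powR_ge0.
have p0 : 0 <= p by rewrite (le_trans (ltW q0)).
have [x1|x1] := leP x 1.
  suff : x `^ q <= 1 `^ q by rewrite powR1; lra.
  by apply: ge0_ler_powR; rewrite ?nnegrE ?(ltW q0).
have xqp : x `^ q <= x `^ p by apply: ler_powR => //; exact: ltW.
suff : x `^ p <= y `^ p by lra.
by apply: ge0_ler_powR; rewrite ?nnegrE ?(le_trans x0 xy).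
Qed.

Lemma powR_dominated {R : realType} {K C p r : R} : 0 <= K -> 0 < C -> p < r ->
  exists t0, 1 <= t0 /\ forall t, t0 <= t -> K * t `^ p < C * t `^ r.
Proof.
move=> K0 C0 pr; set e := r - p; have e0 : 0 < e by rewrite subr_gt0.
have KC : 0 <= (K + 1) / C by rewrite divr_ge0 ?ltW //; lra.
exists (Num.max 1 (((K + 1) / C) `^ e^-1)); split => [|t]; first by rewrite le_max lexx.
rewrite ge_max => /andP[t1 tK]; have t0 : 0 < t by apply: lt_le_trans t1.
have -> : r = p + e by rewrite /e addrC subrK.
rewrite powRD ?(gt_eqF t0) ?implybT // mulrCA [ltRHS]mulrC ltr_pM2r ?powR_gt0 //.
have KCt : (K + 1) / C <= t `^ e.
  rewrite -(powR_invK KC e0).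
  apply: ge0_ler_powR; rewrite ?nnegrE ?powR_ge0 ?(ltW e0) ?(ltW t0) //.
rewrite mulrC ler_pdivrMl // in KCt.
by apply: lt_le_trans KCt; rewrite ltrDl.
Qed.

Lemma ray_profile_lt0 {R : realType} {G P Q sigma p q r b : R} (a Lam : R) :
  0 <= G -> 0 <= P -> 0 <= Q -> 0 < sigma -> 0 < b -> 0 < q -> q <= p -> p < r ->
  exists t0, 1 <= t0 /\ forall t lam, t0 <= t -> 0 <= lam <= Lam ->
    t `^ p * (p^-1 * G) + lam / q * (t `^ q * Q) - a / p * (t `^ p * P)
      - b / r * (t `^ r * sigma) < 0.
Proof.
move=> G0 P0 Q0 sigma0 b0 q0 qp pr.
have p0 : 0 < p by apply: lt_le_trans qp.
have r0 : 0 < r by apply: lt_trans pr.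
set K := p^-1 * G + `|Lam| / q * Q + `|a| / p * P.
have K0 : 0 <= K by rewrite !addr_ge0 ?mulr_ge0 ?divr_ge0 ?invr_ge0 ?(ltW p0) ?(ltW q0).
have [t0 [t01 Kt]] := powR_dominated K0 (mulr_gt0 (divr_gt0 b0 r0) sigma0) pr.
exists t0; split => // t lam tt0 /andP[lam0 lamL].
have t1 : 1 <= t by apply: le_trans tt0.
have tqp : t `^ q <= t `^ p by apply: ler_powR.
have lam_term : lam / q * (t `^ q * Q) <= `|Lam| / q * (t `^ p * Q).
  apply: ler_pM; rewrite ?divr_ge0 ?mulr_ge0 ?powR_ge0 ?(ltW q0) //.
    by rewrite ler_pM2r ?invr_gt0 // (le_trans lamL) ?ler_norm.
  by rewrite ler_wpM2r.
have a_term : - (a / p * (t `^ p * P)) <= `|a| / p * (t `^ p * P).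
  rewrite -mulNr ler_wpM2r ?mulr_ge0 ?powR_ge0 // -mulNr ler_pM2r ?invr_gt0 //.
  by rewrite ler_normr lexx orbT.
have := Kt t tt0; rewrite /K; nra.
Qed.

Lemma pstar_gt {R : realType} N (s p : R) : 0 < s -> 0 < p -> s * p < N%:R ->
  p < pstar N s p.
Proof.
move=> s0 p0 spN; rewrite /pstar ltr_pdivlMr ?subr_gt0 //.
by have := mulr_gt0 (mulr_gt0 p0 s0) p0; nra.
Qed.

Lemma ereal_gt0_lbound {R : realType} {x : \bar R} : (0 < x)%E ->
  exists2 r : R, 0 < r & (r%:E <= x)%E.
Proof.
case: x => [r| |] // r0; first by exists r.
by exists 1; rewrite ?leey.
Qed.

Lemma entry_le_mx_norm {R : realType} {n} (A : 'rV[R]_n) i : `|A 0 i| <= `|A|.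
Proof.
have -> : `|A| = mx_norm A by [].
rewrite mx_normrE.
exact: (le_bigmax _ (fun ij => `|A ij.1 ij.2|) (0, i)).
Qed.

Fixpoint box (R : realType) (M : R) (n : nat) : set (@ms_type R (Rspace R n)) :=
  match n return set (@ms_type R (Rspace R n)) with
  | 0 => `[-M, M]%classic
  | n'.+1 => box R M n' `*` `[-M, M]%classic
  end.
Arguments box {R} M n.

Lemma measurable_box {R : realType} (M : R) n : measurable (box M n).
Proof.
elim: n => [|n IH] /=; first exact: measurable_itv.
by apply: measurableX => //; exact: measurable_itv.
Qed.

Lemma measure_box_lt_pinfty {R : realType} (M : R) n :
  (@ms_meas R (Rspace R n) (box M n) < +oo)%E.
Proof.
have itv_fin : (lebesgue_measure (box M 0) < +oo)%E.
  by rewrite lebesgue_measure_itv /=; case: ifP => _; rewrite ltry.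
elim: n => [|n IH] //=.
rewrite product_measure1E; [|exact: measurable_box|exact: measurable_itv].
by apply: lte_mul_pinfty => //; rewrite ge0_fin_numE.
Qed.

Lemma in_box {R : realType} (M : R) n (x : @ms_type R (Rspace R n)) :
  (forall i, `|@toRow R n x 0 i| <= M) -> box M n x.
Proof.
elim: n x => [|n IH] x xM /=.
  by have := xM ord0; rewrite mxE in_itv /= ler_norml.
case: x xM => x1 x2 xM; split => /=.
  apply: IH => i; have := xM (@rshift 1 n.+1 i).
  by rewrite (@row_mxEr _ 1 1 n.+1).
have := xM (@lshift 1 n.+1 ord0); rewrite (@row_mxEl _ 1 1 n.+1) mxE.
by rewrite in_itv /= ler_norml.
Qed.

Lemma bounded_lebN_lt_pinfty {R : realType} {N} {M : R} {D : set (RN R N)} :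
  measurable D -> (forall x, D x -> `|Defs.coord x| <= M) -> (lebN R N D < +oo)%E.
Proof.
move=> mD DM; apply: (@le_lt_trans _ _ (@ms_meas R (Rspace R N.-1) (box M N.-1))).
  2: exact: measure_box_lt_pinfty.
apply: le_measure; rewrite ?inE //; first exact: measurable_box.
move=> x Dx; apply: in_box => i.
exact: le_trans (entry_le_mx_norm (Defs.coord x) i) (DM x Dx).
Qed.

Section integralZl_gt0.
Import HBNNSimple.
Local Open Scope ereal_scope.
Context {d} {T : measurableType d} {R : realType}.
Context (mu : {measure set T -> \bar R}) (D : set T).

(* Unlike [ge0_integralZl_EFin], no measurability of [f] is needed (the outer
   integrand of [gagliardo] is not known to be measurable): the simple
   functions below [f] are rescaled instead. *)
Let integralZl_le (f : T -> \bar R) (c : R) : (0 < c)%R -> (forall x, 0 <= f x) ->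
  \int[mu]_(x in D) (c%:E * f x) <= c%:E * \int[mu]_(x in D) f x.
Proof.
move=> c0 f0.
rewrite !ge0_integralE //; last by move=> x _; rewrite mule_ge0 // lee_fin ltW.
apply: ge_ereal_sup => _ [h /= hle <-].
have c_neq0 : c != 0%R by rewrite gt_eqF.
have ci0 : (0 <= c^-1)%R by rewrite invr_ge0 ltW.
pose h' := scale_nnsfun h ci0.
have -> : sintegral mu h = sintegral mu (cst c \* h')%R.
  by apply: eq_sintegral => x /=; rewrite mulrA divff ?mul1r.
rewrite sintegralrM lee_pmul2l ?lte_fin //.
apply: ereal_sup_ubound; exists h' => //= x.
have := hle x; rewrite !patchE; case: ifP => _ /= hxf.
  by rewrite -(@lee_pmul2l _ c%:E) ?lte_fin // -EFinM mulrA divff ?mul1r.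
have hx0 : h x = 0%R by apply/eqP; rewrite eq_le -lee_fin hxf /=.
by rewrite hx0 mulr0.
Qed.

Lemma ge0_integralZl_gt0 (f : T -> \bar R) (c : R) : (0 < c)%R ->
  (forall x, 0 <= f x) ->
  \int[mu]_(x in D) (c%:E * f x) = c%:E * \int[mu]_(x in D) f x.
Proof.
move=> c0 f0; apply/le_anti/andP; split; first exact: integralZl_le.
have cf0 x : 0 <= c%:E * f x by rewrite mule_ge0 // lee_fin ltW.
have ci0 : (0 < c^-1)%R by rewrite invr_gt0.
have := integralZl_le _ _ ci0 cf0.
under eq_integral do rewrite muleA -EFinM mulVf ?gt_eqF // mul1e.
move=> ?; rewrite -(@lee_pmul2l _ c^-1%:E) ?lte_fin //.
by rewrite muleA -EFinM mulVf ?gt_eqF ?mul1e.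
Qed.

Lemma integral_powRZ (h : T -> R) (t r : R) :
  (0 < t)%R -> (forall x, 0 <= h x)%R ->
  \int[mu]_(x in D) ((t * h x) `^ r)%:E
  = (t `^ r)%:E * \int[mu]_(x in D) (h x `^ r)%:E.
Proof.
move=> t0 h0; rewrite -ge0_integralZl_gt0 ?powR_gt0 //; last first.
  by move=> x; rewrite lee_fin powR_ge0.
by apply: eq_integral => x _; rewrite -EFinM powRM // ltW.
Qed.

End integralZl_gt0.

Lemma gagliardoZ {R : realType} N (s p t : R) (u : RN R N -> R) : 0 < t ->
  gagliardo N s p (fun x => t * u x) = ((t `^ p)%:E * gagliardo N s p u)%E.
Proof.
move=> t0; rewrite /gagliardo -ge0_integralZl_gt0 ?powR_gt0 //; last first.
  by move=> x; apply: integral_ge0 => y _; rewrite lee_fin divr_ge0 ?powR_ge0.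
apply: eq_integral => x _; rewrite -ge0_integralZl_gt0 ?powR_gt0 //; last first.
  by move=> y; rewrite lee_fin divr_ge0 ?powR_ge0.
apply: eq_integral => y _; rewrite -EFinM -mulrBr normrM (gtr0_norm t0).
by rewrite powRM ?(ltW t0) // mulrA.
Qed.

Lemma gagliardo_ge0 {R : realType} N (s p : R) (u : RN R N -> R) :
  (0 <= gagliardo N s p u)%E.
Proof.
apply: integral_ge0 => x _; apply: integral_ge0 => y _.
by rewrite lee_fin divr_ge0 ?powR_ge0.
Qed.

Lemma normXZ {R : realType} N (s p t : R) (u : RN R N -> R) : 0 < t -> 0 < p ->
  normX N s p (fun x => t * u x) `^ p = t `^ p * normX N s p u `^ p.
Proof.
move=> t0 p0; have g0 := gagliardo_ge0 N s p u.
rewrite /normX gagliardoZ // !powR_invK ?fine_ge0 ?mule_ge0 ?lee_fin ?powR_ge0 //.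
case: (gagliardo N s p u) g0 => [g _| _|//] //=.
by rewrite gt0_muley ?lte_fin ?powR_gt0 // mulr0.
Qed.

Definition pos_moment d (T : measurableType d) {R : realType}
  (mu : {measure set T -> \bar R}) (D : set T) (r : R) (u : T -> R) : \bar R :=
  (\int[mu]_(x in D) (Num.max (u x) 0 `^ r)%:E)%E.
Arguments pos_moment {d T R} mu D r u.

Lemma measurable_pos_powR {d} {T : measurableType d} {R : realType} (u : T -> R) r :
  measurable_fun setT u -> measurable_fun setT (fun x => (Num.max (u x) 0 `^ r)%:E).
Proof.
move=> mf; apply/measurable_EFinP; apply: (measurableT_comp (measurable_powR r)).
by apply: measurable_maxr => //; exact: measurable_cst.
Qed.

Lemma measurable_abs_powR {d} {T : measurableType d} {R : realType} (u : T -> R) r :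
  measurable_fun setT u -> measurable_fun setT (fun x => (`|u x| `^ r)%:E).
Proof.
move=> mf; apply/measurable_EFinP; apply: (measurableT_comp (measurable_powR r)).
exact: measurableT_comp.
Qed.

Section pos_moment.
Local Open Scope ereal_scope.
Context {d} {T : measurableType d} {R : realType} (mu : {measure set T -> \bar R}).
Context {D : set T} {u : T -> R}.
Hypotheses (mD : measurable D) (mf : measurable_fun setT u).

Lemma pos_moment_ge0 r : 0 <= pos_moment mu D r u.
Proof. by apply: integral_ge0 => x _; rewrite lee_fin powR_ge0. Qed.

Lemma pos_moment_fin_num q p : (0 < q)%R -> (q <= p)%R -> mu D < +oo ->
  \int[mu]_(x in D) (`|u x| `^ p)%:E < +oo -> pos_moment mu D q u \is a fin_num.
Proof.
move=> q0 qp muD Lp_fin; rewrite ge0_fin_numE ?pos_moment_ge0 //.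
apply: (@le_lt_trans _ _ (\int[mu]_(x in D) (1 + `|u x| `^ p)%:E)).
  apply: ge0_le_integral => //.
  - by move=> x _; rewrite lee_fin powR_ge0.
  - exact/measurable_funTS/measurable_pos_powR.
  - apply/measurable_EFinP/measurable_funD; first exact: measurable_cst.
    exact/measurable_EFinP/measurable_funTS/measurable_abs_powR.
  move=> x _; rewrite lee_fin powR_le_1D_powR //.
  - by rewrite le_max lexx orbT.
  - by rewrite ge_max normr_ge0 ler_norm.
under eq_integral do rewrite EFinD.
rewrite ge0_integralD //; last exact/measurable_funTS/measurable_abs_powR.
have -> : \int[mu]_(x in D) 1 = mu D by rewrite (integral_cst mu mD 1) mul1e.
exact: lte_add_pinfty.
Qed.

Lemma pos_moment_gt0 r : mu D != 0 -> {ae mu, forall x, D x -> (0 < u x)%R} ->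
  0 < pos_moment mu D r u.
Proof.
move=> muD0 u_pos; rewrite lt0e pos_moment_ge0 andbT; apply/eqP => mom0.
have mom_ae0 : ae_eq mu D (fun x => (Num.max (u x) 0 `^ r)%:E) (cst 0).
  apply/ae_eq_integral_abs => //; first exact/measurable_funTS/measurable_pos_powR.
  by rewrite -mom0; apply: eq_integral => x _; rewrite gee0_abs // lee_fin powR_ge0.
have [A [mA A0 DA]] : {ae mu, forall x, D x -> False}.
  apply: filterS2 mom_ae0 u_pos => x mom_x0 u_x0 Dx; move: (mom_x0 Dx) => [].
  move/powR_eq0_eq0; rewrite max_l ?ltW ?(u_x0 Dx) // => ux0.
  by move: (u_x0 Dx); rewrite ux0 ltxx.
apply/negP: muD0; rewrite negbK eq_le measure_ge0 andbT -A0 le_measure ?inE //.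
by move=> x Dx; apply: DA => /(_ Dx).
Qed.

End pos_moment.

Lemma LpOm_eq1 {R : realType} {N} {p : R} {Om : set (RN R N)} {u : RN R N -> R} :
  0 < p -> LpOm N p Om u = 1 -> (\int[lebN R N]_(x in Om) (`|u x| `^ p)%:E = 1)%E.
Proof.
move=> p0; rewrite /LpOm.
have : (0 <= \int[lebN R N]_(x in Om) (`|u x| `^ p)%:E)%E.
  by apply: integral_ge0 => x _; rewrite lee_fin powR_ge0.
case: (\int[lebN R N]_(x in Om) _)%E => [v| |] //= v0.
  by move=> v1; rewrite -(powR_invK v0 p0) v1 powR1.
by rewrite powR0 ?invr_eq0 ?gt_eqF // => /eqP; rewrite eq_sym oner_eq0.
Qed.

Section Iplus_along_ray.
Context {R : realType} {N : nat} {s p q a b lam : R}.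
Context {Om : set (RN R N)} {u : RN R N -> R}.
Hypothesis p_gt0 : 0 < p.
Local Notation ps := (pstar N s p).
Local Notation mom r := (pos_moment (lebN R N) Om r u).

Lemma Iplus_scale {t : R} : 0 < t ->
  Iplus N s p q a b lam Om (fun x => (t * u x)%R) =
  ((t `^ p * (p^-1 * normX N s p u `^ p))%:E
   + (lam / q)%:E * ((t `^ q)%:E * mom q)
   - (a / p)%:E * ((t `^ p)%:E * mom p)
   - (b / ps)%:E * ((t `^ ps)%:E * mom ps))%E.
Proof.
move=> t0; have u_pos x : 0 <= Num.max (u x) 0 by rewrite le_max lexx orbT.
have posZ x : Num.max (t * u x) 0 = t * Num.max (u x) 0.
  by rewrite maxr_pMr ?mulr0 // ltW.
rewrite /Iplus /pos_moment; congr (_ + _ - _ - _)%E.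
  by rewrite [in LHS]normXZ // mulrCA.
all: congr (_ * _)%E; rewrite -integral_powRZ //; apply: eq_integral => x _.
- by rewrite posZ ger0_norm ?mulr_ge0 ?(ltW t0).
- by rewrite posZ ger0_norm ?mulr_ge0 ?(ltW t0).
- by rewrite posZ.
Qed.

Lemma Iplus_scale_le {t sigma : R} : 0 < t -> 0 <= b -> 0 < ps ->
  mom q \is a fin_num -> mom p \is a fin_num -> (sigma%:E <= mom ps)%E ->
  (Iplus N s p q a b lam Om (fun x => (t * u x)%R) <=
   (t `^ p * (p^-1 * normX N s p u `^ p) + lam / q * (t `^ q * fine (mom q))
    - a / p * (t `^ p * fine (mom p)) - b / ps * (t `^ ps * sigma))%:E)%E.
Proof.
move=> t0 b0 ps0 Qfin Pfin sigma_le; rewrite Iplus_scale //.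
set Q := fine (mom q); set P := fine (mom p).
rewrite -[mom q]fineK // -[mom p]fineK // -/Q -/P.
rewrite [leRHS]EFinB; apply: leeB; first by rewrite -!EFinM -EFinD.
rewrite !EFinM lee_wpmul2l ?lee_fin ?(divr_ge0 b0 (ltW ps0)) //.
by rewrite lee_wpmul2l ?lee_fin ?powR_ge0.
Qed.

End Iplus_along_ray.

Theorem lemma4p5 (R : realType) (N : nat) (s p q a b : R)
  (Om : set (RN R N)) (phi1 : RN R N -> R) :
  (0 < N)%N -> 0 < s < 1 -> 1 < p -> s * p < N%:R ->
  bounded_smooth_domain N Om -> measurable Om ->
  first_eigenfunction N s p Om phi1 ->
  lambda1 N s p Om < a -> 1 < q -> q < p -> 0 < b ->
  forall Lam : R, 0 < Lam ->
    exists t0 : R, 0 < t0 /\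
      forall t lam : R, t0 <= t -> 0 < lam < Lam ->
        (Iplus N s p q a b lam Om (fun x => (t * phi1 x)%R) < 0)%E.
Proof.
move=> _ /andP[s0 _] p1 spN [_ [_ [_ [[M Om_bdd] _]]]] mOm.
move=> [[[mphi _] _] [phi_pos Lp1]] _ q1 qp b0 Lam Lam0.
have p0 : 0 < p by apply: lt_trans p1.
have q0 : 0 < q by apply: lt_trans q1.
have p_lt_ps : p < pstar N s p by exact: pstar_gt.
have Lp_phi := LpOm_eq1 p0 Lp1.
have Om_fin := bounded_lebN_lt_pinfty mOm Om_bdd.
have Om_neq0 : lebN R N Om != 0%E.
  apply/eqP => Om0; move: Lp_phi; rewrite null_set_integral //.
  - by move/eqP; rewrite eq_sym eqe oner_eq0.
  - exact/measurable_funTS/measurable_abs_powR.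
have mom_fin r : 0 < r -> r <= p -> pos_moment (lebN R N) Om r phi1 \is a fin_num.
  move=> r0 rp; apply: (pos_moment_fin_num _ mOm mphi r p) => //.
  by rewrite Lp_phi ltry.
have [sigma sigma0 sigma_le] :=
  ereal_gt0_lbound (pos_moment_gt0 _ mOm mphi (pstar N s p) Om_neq0 phi_pos).
have mom_ge0 r : 0 <= fine (pos_moment (lebN R N) Om r phi1).
  exact/fine_ge0/pos_moment_ge0.
have [t0 [t01 Ht]] := ray_profile_lt0 a Lam (powR_ge0 (normX N s p phi1) p)
  (mom_ge0 p) (mom_ge0 q) sigma0 b0 q0 (ltW qp) p_lt_ps.
exists t0; split => [|t lam tt0 /andP[lam0 lamL]]; first exact: lt_le_trans ltr01 t01.
have t_gt0 : 0 < t by rewrite (lt_le_trans ltr01) ?(le_trans t01).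
apply: le_lt_trans (Iplus_scale_le p0 t_gt0 (ltW b0) (lt_trans p0 p_lt_ps)
  (mom_fin q q0 (ltW qp)) (mom_fin p p0 (lexx p)) sigma_le) _.
by rewrite lte_fin Ht // !ltW.
Qed.
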